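(* In the real plane, consider the conics $$\mathcal{C}:\ y=x^2\qquad\text{and}\qquad \Gamma:\ \alpha y=x^2+\beta xy+\gamma y^2,\quad \alpha\neq 1.$$ Then there is a closed polygonal line with $n$ sides inscribed in $\Gamma$ and circumscribed about $\mathcal{C}$ if and only if the following conditions are satisfied: (a) $\alpha=\cos^2\dfrac{\pi m}{n}$, where $m,n$ are positive integers with $2m<n$; and (b) $\beta^2-4\gamma(1-\alpha)>0$.
   Context: The conics are considered in an affine chart of the real projective plane. A polygonal line $A_1A_2\dots$ is inscribed in $\Gamma$ and circumscribed about $\mathcal{C}$ if all vertices $A_i$ lie on $\Gamma$ and each side line $A_iA_{i+1}$ is tangent to $\mathcal{C}$, consecutive sides through $A_i$ being the two distinct tangent lines from $A_i$ to $\mathcal{C}$. It is closed with $n$ sides if $A_{n+1}=A_1$. *)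

From Stdlib Require Import Reals.
Open Scope R_scope.

(* Homogeneous coordinates (x, y, z) of the real projective plane RP^2.
   A nonzero vector represents a point (or, dually, a line
   a x + b y + c z = 0).  The affine chart is z <> 0, with affine
   coordinates (x/z, y/z). *)
Definition vec := (R * R * R)%type.
Definition vx (v : vec) : R := fst (fst v).
Definition vy (v : vec) : R := snd (fst v).
Definition vz (v : vec) : R := snd v.
Definition vzero : vec := (0, 0, 0).

(* incidence of a point p with a line l *)
Definition dot (l p : vec) : R := vx l * vx p + vy l * vy p + vz l * vz p.

Definition cross (u v : vec) : vec :=
  (vy u * vz v - vz u * vy v,
   vz u * vx v - vx u * vz v,
   vx u * vy v - vy u * vx v).

Definition same_proj (u v : vec) : Prop := cross u v = vzero.

Definition on_C (p : vec) : Prop := vy p * vz p = vx p ^ 2.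

Definition on_Gamma (alpha beta gamma : R) (p : vec) : Prop :=
  alpha * vy p * vz p = vx p ^ 2 + beta * vx p * vy p + gamma * vy p ^ 2.

(* Tangent line to C at a point p of C: the line with coefficient vector
   the gradient of  y z - x^2  at p, i.e. (-2x, z, y). *)
Definition tangent_at_C (p : vec) : vec := (-2 * vx p, vz p, vy p).

Definition tangent_C (l : vec) : Prop :=
  l <> vzero /\
  exists p : vec, p <> vzero /\ on_C p /\ same_proj l (tangent_at_C p).

(* The line through two points (nonzero iff the points are distinct). *)
Definition line_through (A B : vec) : vec := cross A B.

Definition poncelet_closed (alpha beta gamma : R) (n : nat) : Prop :=
  exists A : nat -> vec,
    (forall i, (i <= n)%nat -> A i <> vzero /\ on_Gamma alpha beta gamma (A i)) /\
    (forall i, (i < n)%nat ->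
        line_through (A i) (A (S i)) <> vzero /\
        tangent_C (line_through (A i) (A (S i)))) /\
    (forall i, (0 < i < n)%nat ->
        ~ same_proj (line_through (A (i - 1)%nat) (A i))
                    (line_through (A i) (A (S i)))) /\
    same_proj (A n) (A 0%nat) /\
    ~ same_proj (line_through (A (n - 1)%nat) (A n)) (line_through (A 0%nat) (A 1%nat)).

From Stdlib Require Import Reals Lra Lia ZArith.
Open Scope R_scope.

(* Besides y = 0, which meets Gamma only at the origin and so is never a side, the
   tangents of C are the lines [tangent_line a]; two of them meet at
   [vertex a b] = (a + b : 2 : 2ab), which lies on Gamma iff G(a, b) = 0 for the
   symmetric biquadratic G = [poncelet_corr].  A closed n-gon is therefore an
   n-periodic sequence of side parameters e_k with G(e_k, e_(k+1)) = 0 and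
   e_k, e_(k+1), e_(k+2) pairwise distinct.  By Vieta,
   e_(k-1) + e_(k+1) = (4 alpha - 2) e_k - 2 beta, so f_k = e_k + beta / (2 (1 - alpha))
   satisfies the Chebyshev recurrence f_(k+1) = 2c f_k - f_(k-1) with c = 2 alpha - 1,
   and f_k^2 + f_(k+1)^2 - 2c f_k f_(k+1) = (beta^2 - 4 gamma (1 - alpha)) / (1 - alpha).
   A non-degenerate n-periodic solution forces c = cos (2 pi m / n) with 0 < 2m < n,
   where this form is positive definite.  Conversely f_k = r cos (pi / 2n + 2 pi m k / n)
   is such a solution; the offset pi / 2n keeps f_k, f_(k+1), f_(k+2) distinct. *)

Definition scal (t : R) (v : vec) : vec := (t * vx v, t * vy v, t * vz v).

Lemma vec_ext (u v : vec) : vx u = vx v -> vy u = vy v -> vz u = vz v -> u = v.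
Proof.
  destruct u as [[ux uy] uz], v as [[wx wy] wz]; unfold vx, vy, vz; simpl.
  intros -> -> ->; reflexivity.
Qed.

Ltac vec_ring :=
  apply vec_ext; unfold line_through, cross, scal, vx, vy, vz, vzero; simpl; ring.

Lemma vzero_components (u : vec) : u = vzero -> vx u = 0 /\ vy u = 0 /\ vz u = 0.
Proof. intros ->; repeat split. Qed.

Lemma vec_nonzero (u : vec) : u <> vzero -> vx u <> 0 \/ vy u <> 0 \/ vz u <> 0.
Proof.
  intros Hu.
  destruct (Req_dec (vx u) 0), (Req_dec (vy u) 0), (Req_dec (vz u) 0); auto.
  exfalso; apply Hu, vec_ext; assumption.
Qed.

Lemma scal_eq_vzero (t : R) (u : vec) : t <> 0 -> scal t u = vzero -> u = vzero.
Proof.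
  intros Ht Hu; apply vzero_components in Hu; unfold scal, vx, vy, vz in Hu; simpl in Hu.
  destruct Hu as (Hx & Hy & Hz).
  apply vec_ext; [apply (Rmult_eq_reg_l t) | apply (Rmult_eq_reg_l t)
                 | apply (Rmult_eq_reg_l t)]; unfold vzero, vx, vy, vz in *; simpl; lra.
Qed.

Lemma scal_neq_vzero (t : R) (u : vec) : t <> 0 -> u <> vzero -> scal t u <> vzero.
Proof. intros Ht Hu H; exact (Hu (scal_eq_vzero t u Ht H)). Qed.

Lemma scal_scal (s t : R) (u : vec) : scal s (scal t u) = scal (s * t) u.
Proof. vec_ring. Qed.

Lemma cross_scal_l (t : R) (u v : vec) : cross (scal t u) v = scal t (cross u v).
Proof. vec_ring. Qed.

Lemma cross_scal_r (t : R) (u v : vec) : cross u (scal t v) = scal t (cross u v).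
Proof. vec_ring. Qed.

Lemma cross_self (u : vec) : cross u u = vzero.
Proof. vec_ring. Qed.

Lemma dot_cross_l (u v : vec) : dot (cross u v) u = 0.
Proof. unfold dot, cross, vx, vy, vz; simpl; ring. Qed.

Lemma dot_cross_r (u v : vec) : dot (cross u v) v = 0.
Proof. unfold dot, cross, vx, vy, vz; simpl; ring. Qed.

Lemma dot_scal_l (t : R) (l p : vec) : dot (scal t l) p = t * dot l p.
Proof. unfold dot, scal, vx, vy, vz; simpl; ring. Qed.

Lemma same_proj_scal_l (t : R) (u v : vec) :
  t <> 0 -> same_proj (scal t u) v <-> same_proj u v.
Proof.
  intros Ht; unfold same_proj; rewrite cross_scal_l; split; intros H.
  - exact (scal_eq_vzero t _ Ht H).
  - rewrite H; vec_ring.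
Qed.

Lemma same_proj_scal_r (t : R) (u v : vec) :
  t <> 0 -> same_proj u (scal t v) <-> same_proj u v.
Proof.
  intros Ht; unfold same_proj; rewrite cross_scal_r; split; intros H.
  - exact (scal_eq_vzero t _ Ht H).
  - rewrite H; vec_ring.
Qed.

Lemma same_proj_sym (u v : vec) : same_proj u v -> same_proj v u.
Proof.
  unfold same_proj; intros H; apply vzero_components in H.
  apply vec_ext; unfold cross, vzero, vx, vy, vz in *; simpl in *; lra.
Qed.

Lemma same_proj_scal (u v : vec) : same_proj u v -> u <> vzero -> exists t, v = scal t u.
Proof.
  intros H Hu; apply vzero_components in H; apply vec_nonzero in Hu.
  destruct u as [[ux uy] uz], v as [[wx wy] wz].
  unfold cross, scal, vx, vy, vz in *; simpl in *; destruct H as (E1 & E2 & E3).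
  destruct Hu as [Hx | [Hy | Hz]];
    [exists (wx / ux) | exists (wy / uy) | exists (wz / uz)];
    apply vec_ext; unfold vx, vy, vz; simpl; field_simplify_eq; auto; lra.
Qed.

Lemma tangent_C_scal (t : R) (l : vec) : t <> 0 -> tangent_C l -> tangent_C (scal t l).
Proof.
  intros Ht [Hl [p (Hp & HpC & Hlp)]]; split; [exact (scal_neq_vzero t l Ht Hl) |].
  exists p; repeat split; try assumption.
  unfold same_proj in *; rewrite cross_scal_l, Hlp; vec_ring.
Qed.

(* For [a <> 0] the point [(a, 1, a^2)] is the affine point [(1/a, 1/a^2)] of [C];
   [a = 0] gives its point at infinity.  The only tangent of [C] missed by
   [tangent_line] is the tangent [y = 0] at the origin. *)
Definition tangent_line (a : R) : vec := tangent_at_C (a, 1, a ^ 2).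

Definition tangent_param (l : vec) : R := - vx l / (2 * vz l).

Definition vertex (a b : R) : vec := (a + b, 2, 2 * a * b).

Lemma tangent_param_scal (t a : R) : t <> 0 -> tangent_param (scal t (tangent_line a)) = a.
Proof.
  intros Ht; unfold tangent_param, tangent_line, tangent_at_C, scal, vx, vy, vz; simpl.
  field; exact Ht.
Qed.

Lemma tangent_C_cases (l : vec) :
  tangent_C l ->
  (exists a t, t <> 0 /\ l = scal t (tangent_line a)) \/ (vx l = 0 /\ vz l = 0).
Proof.
  intros [Hl [p (Hp & HpC & Hlp)]].
  destruct (Req_dec (vy p) 0) as [Hy | Hy].
  - right; apply vec_nonzero in Hp; apply vzero_components in Hlp.
    destruct l as [[lx ly] lz], p as [[px py] pz].
    unfold on_C, tangent_at_C, cross, vx, vy, vz in *; simpl in *; subst py.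
    assert (Hpx : px = 0) by nra; subst px.
    assert (Hpz : pz <> 0) by lra.
    destruct Hlp as (E1 & _ & E3); split; apply (Rmult_eq_reg_r pz); lra.
  - left; exists (vx p / vy p).
    assert (Hpt : tangent_at_C p = scal (vy p) (tangent_line (vx p / vy p))).
    { destruct p as [[px py] pz]; unfold on_C, tangent_line, tangent_at_C, scal, vx, vy, vz in *;
        simpl in *.
      apply vec_ext; unfold vx, vy, vz; simpl; field_simplify_eq; auto; lra. }
    assert (Htp : tangent_at_C p <> vzero).
    { intros H; apply vzero_components in H; unfold tangent_at_C, vz in H; simpl in H; lra. }
    destruct (same_proj_scal _ _ (same_proj_sym _ _ Hlp) Htp) as [s Hs].
    subst l; rewrite Hpt, scal_scal in Hl |- *; exists (s * vy p); split; [| reflexivity].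
    intros Hs0; apply Hl; rewrite Hs0; vec_ring.
Qed.

Lemma on_Gamma_y0 (alpha beta gamma : R) (P : vec) :
  on_Gamma alpha beta gamma P -> vy P = 0 -> vx P = 0.
Proof. unfold on_Gamma; intros H Hy; rewrite Hy in H; nra. Qed.

Lemma side_tangent_line (alpha beta gamma : R) (A B : vec) :
  on_Gamma alpha beta gamma A -> on_Gamma alpha beta gamma B ->
  line_through A B <> vzero -> tangent_C (line_through A B) ->
  exists a t, t <> 0 /\ line_through A B = scal t (tangent_line a).
Proof.
  intros GA GB HAB HT.
  destruct (tangent_C_cases _ HT) as [H | [Hx Hz]]; [exact H | exfalso].
  assert (Hy : vy (line_through A B) <> 0).
  { apply vec_nonzero in HAB; destruct HAB as [H | [H | H]]; lra. }
  assert (HyA : vy A = 0).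
  { pose proof (dot_cross_l A B) as H; unfold dot, line_through in *.
    rewrite Hx, Hz in H; apply (Rmult_eq_reg_l (vy (cross A B))); lra. }
  assert (HyB : vy B = 0).
  { pose proof (dot_cross_r A B) as H; unfold dot, line_through in *.
    rewrite Hx, Hz in H; apply (Rmult_eq_reg_l (vy (cross A B))); lra. }
  pose proof (on_Gamma_y0 _ _ _ A GA HyA) as HxA.
  pose proof (on_Gamma_y0 _ _ _ B GB HyB) as HxB.
  apply HAB; unfold line_through, cross; rewrite HxA, HyA, HxB, HyB; vec_ring.
Qed.

Lemma vertex_comm (a b : R) : vertex a b = vertex b a.
Proof. unfold vertex; vec_ring. Qed.

Lemma vertex_neq_vzero (a b : R) : vertex a b <> vzero.
Proof. intros H; apply vzero_components in H; unfold vertex, vy in H; simpl in H; lra. Qed.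

Lemma line_through_vertex (a b c : R) :
  line_through (vertex a b) (vertex b c) = scal (2 * (a - c)) (tangent_line b).
Proof. unfold vertex, tangent_line, tangent_at_C; vec_ring. Qed.

Lemma tangent_lines_meet (a b : R) (P : vec) :
  P <> vzero -> dot (tangent_line a) P = 0 -> dot (tangent_line b) P = 0 -> a <> b ->
  exists t, t <> 0 /\ P = scal t (vertex a b).
Proof.
  intros HP Ha Hb Hab; apply vec_nonzero in HP.
  destruct P as [[x y] z].
  unfold dot, tangent_line, tangent_at_C, vertex, scal, vx, vy, vz in *; simpl in *.
  assert (Hx : x = y * (a + b) / 2).
  { assert (H : (a - b) * (2 * x - (a + b) * y) = 0) by lra.
    apply Rmult_integral in H as [H | H]; lra. }
  assert (Hz : z = y * a * b) by (subst x; nra).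
  assert (Hy : y <> 0) by (intros ->; subst; destruct HP as [H | [H | H]]; lra).
  exists (y / 2); split; [lra |].
  apply vec_ext; unfold vx, vy, vz; simpl; subst; field.
Qed.

Lemma tangent_C_tangent_line (t a : R) : t <> 0 -> tangent_C (scal t (tangent_line a)).
Proof.
  intros Ht; apply tangent_C_scal; [exact Ht |]; split.
  - intros H; apply vzero_components in H; unfold tangent_line, tangent_at_C, vy, vz in H;
      simpl in H; lra.
  - exists (a, 1, a ^ 2); repeat split.
    + intros H; apply vzero_components in H; unfold vy in H; simpl in H; lra.
    + unfold on_C, vx, vy, vz; simpl; ring.
    + unfold same_proj; rewrite cross_self; reflexivity.
Qed.

Lemma same_proj_tangent_line (t s a b : R) :
  t <> 0 -> s <> 0 ->
  same_proj (scal t (tangent_line a)) (scal s (tangent_line b)) <-> a = b.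
Proof.
  intros Ht Hs; rewrite same_proj_scal_l, same_proj_scal_r by assumption; split.
  - intros H; apply vzero_components in H.
    unfold cross, tangent_line, tangent_at_C, vx, vy, vz in H; simpl in H; lra.
  - intros ->; apply cross_self.
Qed.

Definition poncelet_corr (alpha beta gamma a b : R) : R :=
  a ^ 2 + b ^ 2 + (2 - 4 * alpha) * a * b + 2 * beta * (a + b) + 4 * gamma.

Lemma on_Gamma_vertex (alpha beta gamma a b : R) :
  on_Gamma alpha beta gamma (vertex a b) <-> poncelet_corr alpha beta gamma a b = 0.
Proof.
  unfold on_Gamma, poncelet_corr, vertex, vx, vy, vz; simpl.
  set (corr := a ^ 2 + b ^ 2 + (2 - 4 * alpha) * a * b + 2 * beta * (a + b) + 4 * gamma).
  assert (E : alpha * 2 * (2 * a * b) - ((a + b) ^ 2 + beta * (a + b) * 2 + gamma * 2 ^ 2)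
              = - corr) by (unfold corr; ring).
  split; intros H; lra.
Qed.

Lemma on_Gamma_scal (alpha beta gamma t : R) (P : vec) :
  t <> 0 -> on_Gamma alpha beta gamma (scal t P) <-> on_Gamma alpha beta gamma P.
Proof.
  intros Ht; unfold on_Gamma, scal, vx, vy, vz; simpl; split; intros H.
  - apply (Rmult_eq_reg_l (t ^ 2)); [| apply pow_nonzero; exact Ht].
    transitivity (alpha * (t * snd (fst P)) * (t * snd P)); [ring |].
    rewrite H; ring.
  - transitivity (t ^ 2 * (alpha * snd (fst P) * snd P)); [ring |].
    rewrite H; ring.
Qed.

Definition cyclic_polygon (alpha beta gamma : R) (n : nat) (B : nat -> vec) : Prop :=
  (forall k, B (k + n)%nat = B k) /\
  forall k,
    B k <> vzero /\ on_Gamma alpha beta gamma (B k) /\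
    line_through (B k) (B (S k)) <> vzero /\ tangent_C (line_through (B k) (B (S k))) /\
    ~ same_proj (line_through (B k) (B (S k))) (line_through (B (S k)) (B (S (S k)))).

Definition poncelet_orbit (alpha beta gamma : R) (n : nat) (e : nat -> R) : Prop :=
  (forall k, e (k + n)%nat = e k) /\
  forall k,
    poncelet_corr alpha beta gamma (e k) (e (S k)) = 0 /\ e k <> e (S k) /\ e k <> e (S (S k)).

Lemma cyclic_polygon_orbit (alpha beta gamma : R) (n : nat) (B : nat -> vec) :
  cyclic_polygon alpha beta gamma n B ->
  poncelet_orbit alpha beta gamma n (fun k => tangent_param (line_through (B k) (B (S k)))).
Proof.
  intros [B_per HB].
  set (e := fun k => tangent_param (line_through (B k) (B (S k)))).
  assert (side : forall k, exists t, t <> 0 /\ line_through (B k) (B (S k)) = scal t (tangent_line (e k))).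
  { intros k; destruct (HB k) as (_ & G0 & N0 & T0 & _); destruct (HB (S k)) as (_ & G1 & _).
    destruct (side_tangent_line _ _ _ _ _ G0 G1 N0 T0) as (a & t & Ht & E).
    exists t; split; [exact Ht |]; unfold e; rewrite E, tangent_param_scal by exact Ht.
    reflexivity. }
  assert (e_neq : forall k, e k <> e (S k)).
  { intros k Heq; destruct (HB k) as (_ & _ & _ & _ & D).
    destruct (side k) as (t & Ht & Et), (side (S k)) as (s & Hs & Es).
    apply D; rewrite Et, Es, Heq; apply same_proj_tangent_line; auto. }
  assert (at_vertex : forall k, exists t, t <> 0 /\ B (S k) = scal t (vertex (e k) (e (S k)))).
  { intros k; destruct (HB (S k)) as (NB & _).
    destruct (side k) as (t & Ht & Et), (side (S k)) as (s & Hs & Es).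
    apply tangent_lines_meet; [exact NB | | | exact (e_neq k)].
    - apply (Rmult_eq_reg_l t); [| exact Ht]; rewrite Rmult_0_r, <- dot_scal_l, <- Et.
      apply dot_cross_r.
    - apply (Rmult_eq_reg_l s); [| exact Hs]; rewrite Rmult_0_r, <- dot_scal_l, <- Es.
      apply dot_cross_l. }
  split.
  - intros k; unfold e; simpl; rewrite <- plus_Sn_m, !B_per; reflexivity.
  - intros k; repeat split; [| apply e_neq |].
    + destruct (at_vertex k) as (t & Ht & Et); destruct (HB (S k)) as (_ & G & _).
      rewrite Et, on_Gamma_scal in G by exact Ht; apply on_Gamma_vertex; exact G.
    + intros Heq; destruct (HB (S k)) as (_ & _ & N & _).
      destruct (at_vertex k) as (t & Ht & Et), (at_vertex (S k)) as (s & Hs & Es).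
      apply N; rewrite Et, Es, <- Heq, (vertex_comm (e (S k))); unfold line_through.
      rewrite cross_scal_l, cross_scal_r, cross_self; vec_ring.
Qed.

Lemma orbit_cyclic_polygon (alpha beta gamma : R) (n : nat) (e : nat -> R) :
  poncelet_orbit alpha beta gamma n e ->
  cyclic_polygon alpha beta gamma n (fun k => vertex (e k) (e (S k))).
Proof.
  intros [e_per He].
  assert (side_nz : forall k, 2 * (e k - e (S (S k))) <> 0).
  { intros k; destruct (He k) as (_ & _ & D); lra. }
  split.
  - intros k; simpl; rewrite <- plus_Sn_m, !e_per; reflexivity.
  - intros k; destruct (He k) as (G & _).
    rewrite !line_through_vertex; split; [| split; [| split; [| split]]].
    + apply vertex_neq_vzero.
    + apply on_Gamma_vertex; exact G.
    + intros H; apply vzero_components in H; destruct H as (_ & _ & H).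
      apply (side_nz k); unfold scal, tangent_line, tangent_at_C, vy, vz in H; simpl in H; lra.
    + apply tangent_C_tangent_line, side_nz.
    + rewrite same_proj_tangent_line by apply side_nz.
      destruct (He (S k)) as (_ & D & _); exact D.
Qed.

Lemma cyclic_polygon_closed (alpha beta gamma : R) (n : nat) (B : nat -> vec) :
  (0 < n)%nat -> cyclic_polygon alpha beta gamma n B -> poncelet_closed alpha beta gamma n.
Proof.
  intros Hn [B_per HB].
  assert (B_n : B n = B 0%nat) by exact (B_per 0%nat).
  assert (B_Sn : B (S n) = B 1%nat) by exact (B_per 1%nat).
  exists B; split; [| split; [| split; [| split]]].
  - intros i _; destruct (HB i) as (N & G & _); split; assumption.
  - intros i _; destruct (HB i) as (_ & _ & N & T & _); split; assumption.
  - intros i Hi; destruct (HB (i - 1)%nat) as (_ & _ & _ & _ & D).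
    replace (S (i - 1)) with i in D by lia; exact D.
  - rewrite B_n; apply cross_self.
  - destruct (HB (n - 1)%nat) as (_ & _ & _ & _ & D).
    replace (S (n - 1)) with n in D by lia; rewrite B_Sn, B_n in D; rewrite B_n; exact D.
Qed.

Lemma closing_corner_two_le (n : nat) (A : nat -> vec) :
  ~ same_proj (line_through (A (n - 1)%nat) (A n)) (line_through (A 0%nat) (A 1%nat)) ->
  (2 <= n)%nat.
Proof.
  intros D; destruct n as [| [| n']]; [exfalso | exfalso | lia]; apply D; simpl.
  - unfold same_proj, line_through; rewrite cross_self; vec_ring.
  - apply cross_self.
Qed.

Section ClosedPolygon.

Variables (alpha beta gamma : R) (n : nat) (A : nat -> vec).
Hypothesis vertex_ok : forall i, (i <= n)%nat -> A i <> vzero /\ on_Gamma alpha beta gamma (A i).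
Hypothesis side_ok : forall i, (i < n)%nat ->
  line_through (A i) (A (S i)) <> vzero /\ tangent_C (line_through (A i) (A (S i))).
Hypothesis corner_ok : forall i, (0 < i < n)%nat ->
  ~ same_proj (line_through (A (i - 1)%nat) (A i)) (line_through (A i) (A (S i))).
Hypothesis closing : same_proj (A n) (A 0%nat).
Hypothesis closing_corner :
  ~ same_proj (line_through (A (n - 1)%nat) (A n)) (line_through (A 0%nat) (A 1%nat)).

Lemma closed_first_vertex : exists t, t <> 0 /\ A 0%nat = scal t (A n).
Proof.
  destruct (vertex_ok n (le_n n)) as [NAn _].
  destruct (vertex_ok 0%nat ltac:(lia)) as [NA0 _].
  destruct (same_proj_scal _ _ closing NAn) as [t Ht].
  exists t; split; [| exact Ht].
  intros ->; apply NA0; rewrite Ht; vec_ring.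
Qed.

Let B k := A (k mod n).

(* Only the last side changes: it now ends at [A 0] instead of the proportional [A n]. *)
Lemma periodized_side (i : nat) : (i < n)%nat ->
  exists s, s <> 0 /\ line_through (B i) (B (S i)) = scal s (line_through (A i) (A (S i))).
Proof.
  intros Hi; unfold B; rewrite Nat.mod_small by exact Hi.
  destruct (Nat.eq_dec (S i) n) as [Hin | Hin].
  - destruct closed_first_vertex as (t & Ht & Et).
    exists t; split; [exact Ht |].
    rewrite Hin, Nat.Div0.mod_same, Et; apply cross_scal_r.
  - exists 1; split; [lra |].
    rewrite Nat.mod_small by lia; vec_ring.
Qed.

Lemma periodized_window (i : nat) : (i < n)%nat ->
  B i <> vzero /\ on_Gamma alpha beta gamma (B i) /\
  line_through (B i) (B (S i)) <> vzero /\ tangent_C (line_through (B i) (B (S i))) /\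
  ~ same_proj (line_through (B i) (B (S i))) (line_through (B (S i)) (B (S (S i)))).
Proof.
  intros Hi.
  destruct (periodized_side i Hi) as (s & Hs & Es); destruct (side_ok i Hi) as [N T].
  rewrite Es; split; [| split; [| split; [| split]]].
  - unfold B; rewrite Nat.mod_small by exact Hi; apply vertex_ok; lia.
  - unfold B; rewrite Nat.mod_small by exact Hi; apply vertex_ok; lia.
  - apply scal_neq_vzero; assumption.
  - apply tangent_C_scal; assumption.
  - rewrite same_proj_scal_l by exact Hs.
    destruct (Nat.eq_dec (S i) n) as [Hin | Hin].
    + pose proof (closing_corner_two_le n A closing_corner).
      unfold B; rewrite Hin, Nat.Div0.mod_same.
      replace (S n) with (1 + 1 * n)%nat by lia; rewrite Nat.Div0.mod_add, Nat.mod_small by lia.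
      replace (n - 1)%nat with i in closing_corner by lia; exact closing_corner.
    + destruct (periodized_side (S i) ltac:(lia)) as (s' & Hs' & Es').
      rewrite Es', same_proj_scal_r by exact Hs'.
      pose proof (corner_ok (S i) ltac:(lia)) as D; simpl in D; rewrite Nat.sub_0_r in D.
      exact D.
Qed.

Lemma closed_cyclic_polygon : cyclic_polygon alpha beta gamma n B.
Proof.
  pose proof (closing_corner_two_le n A closing_corner).
  split.
  - intros k; unfold B; replace (k + n)%nat with (k + 1 * n)%nat by lia.
    rewrite Nat.Div0.mod_add; reflexivity.
  - intros k.
    assert (shift : forall j, B (j + k)%nat = B (j + k mod n)%nat).
    { intros j; unfold B; rewrite Nat.Div0.add_mod_idemp_r; reflexivity. }
    pose proof (shift 0%nat) as E0; pose proof (shift 1%nat) as E1;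
      pose proof (shift 2%nat) as E2; simpl in E0, E1, E2.
    rewrite E0, E1, E2; apply periodized_window, Nat.mod_upper_bound; lia.
Qed.

End ClosedPolygon.

Lemma poncelet_closed_iff_cyclic (alpha beta gamma : R) (n : nat) :
  poncelet_closed alpha beta gamma n <->
  (0 < n)%nat /\ exists B, cyclic_polygon alpha beta gamma n B.
Proof.
  split.
  - intros (A & H1 & H2 & H3 & H4 & H5); split.
    + pose proof (closing_corner_two_le n A H5); lia.
    + eexists; eapply closed_cyclic_polygon; eassumption.
  - intros (Hn & B & HB); exact (cyclic_polygon_closed _ _ _ _ _ Hn HB).
Qed.

Lemma cos_add_twice (t p : R) : cos (t + p + p) = 2 * cos p * cos (t + p) - cos t.
Proof.
  repeat (rewrite cos_plus || rewrite sin_plus).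
  pose proof (sin2_cos2 p) as E; unfold Rsqr in E.
  apply Rminus_diag_uniq.
  transitivity (cos t * (1 - (sin p * sin p + cos p * cos p))); [ring | rewrite E; ring].
Qed.

Lemma sin_add_twice (t p : R) : sin (t + p + p) = 2 * cos p * sin (t + p) - sin t.
Proof.
  repeat (rewrite cos_plus || rewrite sin_plus).
  pose proof (sin2_cos2 p) as E; unfold Rsqr in E.
  apply Rminus_diag_uniq.
  transitivity (sin t * (1 - (sin p * sin p + cos p * cos p))); [ring | rewrite E; ring].
Qed.

Lemma cos_eq_1_period (y : R) : cos y = 1 -> exists k : Z, y = 2 * IZR k * PI.
Proof.
  intros H; replace y with (2 * (y / 2)) in H by field; rewrite cos_2a_sin in H.
  assert (Hs : sin (y / 2) = 0) by nra.
  destruct (sin_eq_0_0 _ Hs) as [k Hk]; exists k; lra.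
Qed.

Definition cheb_form (c x y : R) : R := x ^ 2 + y ^ 2 - 2 * c * x * y.

Lemma cheb_form_pos (c x y : R) : -1 < c < 1 -> x <> 0 \/ y <> 0 -> 0 < cheb_form c x y.
Proof.
  intros Hc Hxy; unfold cheb_form.
  assert (H1c : 0 < 1 - c * c) by nra.
  destruct Hxy as [H | H].
  - assert (0 < x * x) by (apply Rsqr_pos_lt; exact H).
    replace (x ^ 2 + y ^ 2 - 2 * c * x * y) with ((y - c * x) ^ 2 + (1 - c * c) * x ^ 2) by ring.
    pose proof (pow2_ge_0 (y - c * x)); nra.
  - assert (0 < y * y) by (apply Rsqr_pos_lt; exact H).
    replace (x ^ 2 + y ^ 2 - 2 * c * x * y) with ((x - c * y) ^ 2 + (1 - c * c) * y ^ 2) by ring.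
    pose proof (pow2_ge_0 (x - c * y)); nra.
Qed.

Lemma cheb_form_cos (x t : R) : cheb_form (cos t) (cos x) (cos (x + t)) = sin t ^ 2.
Proof.
  unfold cheb_form; rewrite cos_plus.
  pose proof (sin2_cos2 x) as Ex; pose proof (sin2_cos2 t) as Et; unfold Rsqr in *.
  transitivity (sin t ^ 2 + cos x ^ 2 * (1 - (sin t * sin t + cos t * cos t))
                + sin t ^ 2 * ((sin x * sin x + cos x * cos x) - 1));
    [ring | rewrite Ex, Et; ring].
Qed.

Lemma pow_neq_1_of_root (l u : R) (n : nat) :
  l * u = 1 -> l <> u -> (0 < n)%nat -> l ^ n <> 1.
Proof.
  intros Hlu Hne Hn Hpow; apply pow_R1 in Hpow as [Habs | Hn0]; [| lia].
  assert (Hll : l * l = 1).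
  { pose proof (Rsqr_abs l) as E; unfold Rsqr in E; rewrite E, Habs; ring. }
  apply Hne; transitivity (l * (l * u)); [rewrite Hlu; ring |].
  transitivity ((l * l) * u); [ring | rewrite Hll; ring].
Qed.

Section PeriodicRecurrence.

Variables (c : R) (n : nat) (f : nat -> R).
Hypothesis f_rec : forall k, f (S (S k)) = 2 * c * f (S k) - f k.

Lemma rec_geometric (rho sig : R) :
  rho + sig = 2 * c -> rho * sig = 1 ->
  forall k, f (S k) - sig * f k = rho ^ k * (f 1%nat - sig * f 0%nat).
Proof.
  intros Hsum Hprod; induction k as [| k IH]; [simpl; ring |].
  rewrite f_rec, <- Hsum; simpl; rewrite Rmult_assoc, <- IH.
  transitivity (rho * f (S k) - rho * sig * f k); [rewrite Hprod |]; ring.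
Qed.

Lemma rec_parabolic_linear :
  c = -1 -> forall k, (-1) ^ k * f k = f 0%nat - INR k * (f 1%nat + f 0%nat).
Proof.
  intros Hc.
  assert (G : forall k, f (S k) + f k = (-1) ^ k * (f 1%nat + f 0%nat)).
  { intros k; replace (f 1%nat + f 0%nat) with (f 1%nat - -1 * f 0%nat) by ring.
    rewrite <- (rec_geometric (-1) (-1)) by lra; ring. }
  induction k as [| k IH]; [simpl; ring |].
  replace (f (S k)) with ((-1) ^ k * (f 1%nat + f 0%nat) - f k) by (rewrite <- G; ring).
  assert (Hsq : (-1) ^ k * (-1) ^ k = 1).
  { rewrite <- Rpow_mult_distr, <- (pow1 k); f_equal; ring. }
  rewrite S_INR; simpl.
  transitivity (- ((-1) ^ k * (-1) ^ k) * (f 1%nat + f 0%nat) + (-1) ^ k * f k);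
    [ring | rewrite Hsq, IH; ring].
Qed.

Lemma rec_elliptic_closed_form (phi : R) :
  cos phi = c -> sin phi <> 0 ->
  forall k, f k = f 0%nat * cos (INR k * phi)
                  + (f 1%nat - f 0%nat * c) / sin phi * sin (INR k * phi).
Proof.
  intros Hcos Hsin.
  set (q := (f 1%nat - f 0%nat * c) / sin phi).
  assert (pair : forall k, f k = f 0%nat * cos (INR k * phi) + q * sin (INR k * phi) /\
                           f (S k) = f 0%nat * cos (INR (S k) * phi) + q * sin (INR (S k) * phi)).
  { induction k as [| k [IH0 IH1]]; split.
    - simpl; rewrite Rmult_0_l, cos_0, sin_0; ring.
    - simpl; rewrite Rmult_1_l, Hcos; unfold q; field; exact Hsin.
    - exact IH1.
    - rewrite f_rec, IH0, IH1, !S_INR, !Rmult_plus_distr_r, !Rmult_1_l.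
      rewrite cos_add_twice, sin_add_twice, Hcos; ring. }
  intros k; exact (proj1 (pair k)).
Qed.

Hypothesis n_pos : (0 < n)%nat.
Hypothesis f_n : f n = f 0%nat.
Hypothesis f_Sn : f (S n) = f 1%nat.

Lemma periodic_rec_geometric (rho sig : R) :
  rho + sig = 2 * c -> rho * sig = 1 -> rho ^ n <> 1 -> f 1%nat = sig * f 0%nat.
Proof.
  intros Hsum Hprod Hpow.
  pose proof (rec_geometric rho sig Hsum Hprod n) as G; rewrite f_n, f_Sn in G.
  assert (H : (f 1%nat - sig * f 0%nat) * (1 - rho ^ n) = 0) by lra.
  apply Rmult_integral in H as [H | H]; lra.
Qed.

Lemma periodic_rec_hyperbolic : c < -1 \/ 1 < c -> f 0%nat = 0 /\ f 1%nat = 0.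
Proof.
  intros Hc.
  assert (Hd : 0 < c * c - 1) by (destruct Hc; nra).
  set (d := sqrt (c * c - 1)).
  assert (Hd0 : 0 < d) by (apply sqrt_lt_R0; exact Hd).
  assert (Hdd : d * d = c * c - 1) by (apply sqrt_sqrt; lra).
  assert (Hprod : (c + d) * (c - d) = 1) by nra.
  assert (Hprod' : (c - d) * (c + d) = 1) by nra.
  pose proof (periodic_rec_geometric (c + d) (c - d) ltac:(lra) Hprod
                (pow_neq_1_of_root _ _ _ Hprod ltac:(lra) n_pos)) as E1.
  pose proof (periodic_rec_geometric (c - d) (c + d) ltac:(lra) Hprod'
                (pow_neq_1_of_root _ _ _ Hprod' ltac:(lra) n_pos)) as E2.
  assert (H0 : f 0%nat = 0).
  { apply (Rmult_eq_reg_l (2 * d)); lra. }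
  split; [exact H0 | rewrite E1, H0; ring].
Qed.

Lemma periodic_rec_parabolic : c = -1 -> f 2%nat = f 0%nat.
Proof.
  intros Hc.
  assert (Hg : f 1%nat + f 0%nat = 0).
  { destruct (Req_dec ((-1) ^ n) 1) as [Hpow | Hpow].
    - pose proof (rec_parabolic_linear Hc n) as L; rewrite Hpow, f_n in L.
      assert (Hn : 0 < INR n) by (apply lt_0_INR; exact n_pos).
      apply (Rmult_eq_reg_l (INR n)); lra.
    - pose proof (periodic_rec_geometric (-1) (-1) ltac:(lra) ltac:(lra) Hpow); lra. }
  rewrite f_rec, Hc; lra.
Qed.

Lemma periodic_rec_angle (phi : R) :
  cos phi = c -> sin phi <> 0 -> f 0%nat <> 0 \/ f 1%nat <> 0 -> cos (INR n * phi) = 1.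
Proof.
  intros Hcos Hsin Hnz.
  pose proof (rec_elliptic_closed_form phi Hcos Hsin) as F.
  set (q := (f 1%nat - f 0%nat * c) / sin phi) in F.
  assert (Hf1 : f 1%nat = f 0%nat * c + q * sin phi) by (unfold q; field; exact Hsin).
  pose proof (F n) as En; pose proof (F (S n)) as ESn.
  rewrite f_n in En; rewrite f_Sn, S_INR, Rmult_plus_distr_r, Rmult_1_l,
    cos_plus, sin_plus, Hcos in ESn.
  set (C := cos (INR n * phi)) in *; set (S := sin (INR n * phi)) in *.
  (* [A1] and [A2] say that the rotation by [INR n * phi] fixes the vector [(f 0, q)]. *)
  assert (A1 : f 0%nat * (C - 1) + q * S = 0) by lra.
  assert (A2 : q * (C - 1) - f 0%nat * S = 0).
  { apply (Rmult_eq_reg_l (sin phi)); [| exact Hsin].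
    transitivity ((f 0%nat * (C * c - S * sin phi) + q * (S * c + C * sin phi)
                   - (f 0%nat * c + q * sin phi)) - c * (f 0%nat * (C - 1) + q * S)); [ring |].
    rewrite A1, <- ESn, <- Hf1; ring. }
  assert (Hsq : (f 0%nat ^ 2 + q ^ 2) * (C - 1) = 0).
  { transitivity (f 0%nat * (f 0%nat * (C - 1) + q * S) + q * (q * (C - 1) - f 0%nat * S));
      [ring | rewrite A1, A2; ring]. }
  apply Rmult_integral in Hsq as [Hsq | Hsq]; [exfalso | lra].
  assert (H0 : f 0%nat = 0) by nra; assert (Hq : q = 0) by nra.
  destruct Hnz as [H | H]; apply H; [exact H0 |]; rewrite Hf1, H0, Hq; ring.
Qed.

Lemma periodic_rec_elliptic :
  -1 < c < 1 -> f 0%nat <> 0 \/ f 1%nat <> 0 ->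
  exists m : nat, (0 < m)%nat /\ (2 * m < n)%nat /\ c = cos (2 * PI * INR m / INR n).
Proof.
  intros Hc Hnz.
  set (phi := acos c).
  assert (Hphi : 0 < phi < PI) by (apply acos_bound_lt; exact Hc).
  assert (Hcos : cos phi = c) by (apply cos_acos; lra).
  assert (Hsin : 0 < sin phi) by (apply sin_gt_0; lra).
  destruct (cos_eq_1_period _ (periodic_rec_angle phi Hcos ltac:(lra) Hnz)) as [k Hk].
  assert (Hn : 0 < INR n) by (apply lt_0_INR; exact n_pos).
  pose proof PI_RGT_0.
  assert (Hk0 : (0 < k)%Z).
  { apply lt_IZR; assert (0 < INR n * phi) by nra; nra. }
  assert (Hkn : (2 * k < Z.of_nat n)%Z).
  { apply lt_IZR; rewrite mult_IZR, <- INR_IZR_INZ.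
    assert (INR n * phi < INR n * PI) by nra; nra. }
  exists (Z.to_nat k); split; [lia | split; [lia |]].
  rewrite INR_IZR_INZ, Z2Nat.id by lia; rewrite <- Hcos; f_equal.
  field_simplify_eq; lra.
Qed.

Lemma periodic_rec_nondegenerate :
  c <> 1 -> f 2%nat <> f 0%nat -> -1 < c < 1 /\ (f 0%nat <> 0 \/ f 1%nat <> 0).
Proof.
  intros Hc1 H02.
  assert (Hnz : f 0%nat <> 0 \/ f 1%nat <> 0).
  { destruct (Req_dec (f 0%nat) 0) as [H0 | H0]; [right | left; exact H0].
    intros H1; apply H02; rewrite f_rec, H0, H1; ring. }
  split; [| exact Hnz].
  destruct (Rlt_or_le c (-1)) as [H | H];
    [destruct (periodic_rec_hyperbolic (or_introl H)); tauto |].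
  destruct (Rlt_or_le 1 c) as [H' | H'];
    [destruct (periodic_rec_hyperbolic (or_intror H')); tauto |].
  destruct (Req_dec c (-1)) as [Hm | Hm]; [exfalso; exact (H02 (periodic_rec_parabolic Hm)) |].
  lra.
Qed.

End PeriodicRecurrence.

Lemma poncelet_corr_vieta (alpha beta gamma x a b : R) :
  poncelet_corr alpha beta gamma a x = 0 -> poncelet_corr alpha beta gamma x b = 0 -> a <> b ->
  a + b = (4 * alpha - 2) * x - 2 * beta.
Proof.
  intros Ha Hb Hab.
  assert (H : (a - b) * (a + b + (2 - 4 * alpha) * x + 2 * beta) = 0).
  { transitivity (poncelet_corr alpha beta gamma a x - poncelet_corr alpha beta gamma x b);
      [unfold poncelet_corr; ring | rewrite Ha, Hb; ring]. }
  apply Rmult_integral in H as [H | H]; lra.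
Qed.

Lemma poncelet_corr_center (alpha beta gamma a b : R) :
  alpha <> 1 ->
  (1 - alpha) * poncelet_corr alpha beta gamma a b =
  (1 - alpha) * cheb_form (2 * alpha - 1) (a + beta / (2 * (1 - alpha)))
                                           (b + beta / (2 * (1 - alpha)))
  - (beta ^ 2 - 4 * gamma * (1 - alpha)).
Proof. intros Ha; unfold poncelet_corr, cheb_form; field; lra. Qed.

Definition cos_condition (alpha beta gamma : R) (n : nat) : Prop :=
  (exists m : nat, (0 < m)%nat /\ (2 * m < n)%nat /\ alpha = (cos (PI * INR m / INR n)) ^ 2) /\
  beta ^ 2 - 4 * gamma * (1 - alpha) > 0.

Lemma orbit_cos_condition (alpha beta gamma : R) (n : nat) (e : nat -> R) :
  alpha <> 1 -> (0 < n)%nat -> poncelet_orbit alpha beta gamma n e ->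
  cos_condition alpha beta gamma n.
Proof.
  intros Ha Hn [e_per He].
  set (h := beta / (2 * (1 - alpha))); set (c := 2 * alpha - 1).
  set (f := fun k => e k + h).
  assert (f_rec : forall k, f (S (S k)) = 2 * c * f (S k) - f k).
  { intros k; destruct (He k) as (G0 & _ & D); destruct (He (S k)) as (G1 & _).
    pose proof (poncelet_corr_vieta _ _ _ _ _ _ G0 G1 D) as V.
    unfold f, c, h; replace (e (S (S k))) with ((4 * alpha - 2) * e (S k) - 2 * beta - e k)
      by lra.
    field; lra. }
  assert (f_n : f n = f 0%nat) by (unfold f; rewrite <- (e_per 0%nat); reflexivity).
  assert (f_Sn : f (S n) = f 1%nat) by (unfold f; rewrite <- (e_per 1%nat); reflexivity).
  assert (f_02 : f 2%nat <> f 0%nat).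
  { destruct (He 0%nat) as (_ & _ & D); unfold f; intros H; apply D; lra. }
  destruct (periodic_rec_nondegenerate c n f f_rec Hn f_n f_Sn ltac:(unfold c; lra) f_02)
    as [Hc Hnz].
  split.
  - destruct (periodic_rec_elliptic c n f f_rec Hn f_n f_Sn Hc Hnz) as (m & Hm0 & Hmn & Hcm).
    exists m; split; [exact Hm0 | split; [exact Hmn |]].
    assert (Hnr : INR n <> 0) by (apply not_0_INR; lia).
    replace (2 * PI * INR m / INR n) with (2 * (PI * INR m / INR n)) in Hcm by (field; exact Hnr).
    rewrite cos_2a_cos in Hcm; unfold c in Hcm; simpl; lra.
  - destruct (He 0%nat) as (G & _).
    pose proof (poncelet_corr_center alpha beta gamma (e 0%nat) (e 1%nat) Ha) as E.
    rewrite G, Rmult_0_r in E; fold h c in E.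
    pose proof (cheb_form_pos c (f 0%nat) (f 1%nat) Hc Hnz).
    assert (0 < 1 - alpha) by (unfold c in Hc; lra).
    unfold f in *; nra.
Qed.

Lemma poncelet_corr_cos (alpha beta gamma r theta x : R) :
  alpha <> 1 -> 2 * alpha - 1 = cos theta ->
  (1 - alpha) * (r * sin theta) ^ 2 = beta ^ 2 - 4 * gamma * (1 - alpha) ->
  poncelet_corr alpha beta gamma (- (beta / (2 * (1 - alpha))) + r * cos x)
                                 (- (beta / (2 * (1 - alpha))) + r * cos (x + theta)) = 0.
Proof.
  intros Ha Hc Hr; apply (Rmult_eq_reg_l (1 - alpha)); [| lra].
  rewrite poncelet_corr_center, Hc by exact Ha.
  set (h := beta / (2 * (1 - alpha))).
  replace (- h + r * cos x + h) with (r * cos x) by ring.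
  replace (- h + r * cos (x + theta) + h) with (r * cos (x + theta)) by ring.
  transitivity ((1 - alpha) * (r ^ 2 * cheb_form (cos theta) (cos x) (cos (x + theta)))
                - (beta ^ 2 - 4 * gamma * (1 - alpha))); [unfold cheb_form; ring |].
  rewrite cheb_form_cos, <- Hr; ring.
Qed.

Lemma pi_ratio_bounds (p n : nat) : (0 < p)%nat -> (p < n)%nat -> 0 < PI * INR p / INR n < PI.
Proof.
  intros Hp Hpn; pose proof PI_RGT_0 as Hpi.
  assert (Hpr : 0 < INR p < INR n) by (split; [apply lt_0_INR | apply lt_INR]; lia).
  split.
  - apply Rdiv_lt_0_compat; nra.
  - apply (Rmult_lt_reg_r (INR n)); [lra |]; unfold Rdiv.
    rewrite Rmult_assoc, Rinv_l by lra; nra.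
Qed.

Lemma sin_odd_multiple_neq_0 (N n : nat) :
  (0 < n)%nat -> sin (PI * (2 * INR N + 1) / (2 * INR n)) <> 0.
Proof.
  intros Hn H; destruct (sin_eq_0_0 _ H) as [z Hz].
  assert (Hnr : 0 < INR n) by (apply lt_0_INR; exact Hn).
  pose proof PI_RGT_0.
  assert (E : 2 * INR N + 1 = IZR z * (2 * INR n)).
  { apply (Rmult_eq_reg_r (PI / (2 * INR n))).
    - transitivity (PI * (2 * INR N + 1) / (2 * INR n)); [field; lra |].
      rewrite Hz; field; lra.
    - apply Rmult_integral_contrapositive; split; [lra |].
      apply Rinv_neq_0_compat; lra. }
  rewrite !INR_IZR_INZ, <- !mult_IZR, <- plus_IZR in E; apply eq_IZR in E; lia.
Qed.

Lemma cos_grid_neq (n m k j : nat) :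
  (0 < j * m)%nat -> (j * m < n)%nat ->
  cos (PI / (2 * INR n) + INR k * (2 * PI * INR m / INR n)) <>
  cos (PI / (2 * INR n) + INR (k + j) * (2 * PI * INR m / INR n)).
Proof.
  intros Hjm Hjmn Heq.
  assert (Hnr : 0 < INR n) by (apply lt_0_INR; lia).
  assert (H : cos (PI / (2 * INR n) + INR k * (2 * PI * INR m / INR n)) -
              cos (PI / (2 * INR n) + INR (k + j) * (2 * PI * INR m / INR n)) = 0) by lra.
  rewrite form2 in H.
  replace ((PI / (2 * INR n) + INR k * (2 * PI * INR m / INR n) -
            (PI / (2 * INR n) + INR (k + j) * (2 * PI * INR m / INR n))) / 2)
    with (- (PI * INR (j * m) / INR n)) in H
    by (rewrite plus_INR, mult_INR; field; lra).
  replace ((PI / (2 * INR n) + INR k * (2 * PI * INR m / INR n) +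
            (PI / (2 * INR n) + INR (k + j) * (2 * PI * INR m / INR n))) / 2)
    with (PI * (2 * INR (m * (2 * k + j)) + 1) / (2 * INR n)) in H
    by (rewrite !mult_INR, !plus_INR, !mult_INR; simpl; field; lra).
  rewrite sin_neg in H.
  pose proof (sin_gt_0 _ (proj1 (pi_ratio_bounds _ _ Hjm Hjmn))
                         (proj2 (pi_ratio_bounds _ _ Hjm Hjmn))) as Hs.
  apply Rmult_integral in H as [H | H].
  - lra.
  - exact (sin_odd_multiple_neq_0 _ n ltac:(lia) H).
Qed.

Lemma cos_condition_orbit (alpha beta gamma : R) (n : nat) :
  cos_condition alpha beta gamma n ->
  (0 < n)%nat /\ exists e, poncelet_orbit alpha beta gamma n e.
Proof.
  intros [(m & Hm0 & Hmn & Hal) HD]; split; [lia |].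
  assert (Hnr : 0 < INR n) by (apply lt_0_INR; lia).
  set (theta := 2 * PI * INR m / INR n).
  assert (Htheta : 0 < theta < PI).
  { replace theta with (PI * INR (2 * m) / INR n)
      by (unfold theta; rewrite mult_INR; simpl; field; lra).
    apply pi_ratio_bounds; lia. }
  assert (Hsin : 0 < sin theta) by (apply sin_gt_0; lra).
  assert (Hc : 2 * alpha - 1 = cos theta).
  { unfold theta; replace (2 * PI * INR m / INR n) with (2 * (PI * INR m / INR n)) by (field; lra).
    rewrite cos_2a_cos, Hal; ring. }
  assert (Ha1 : 0 < 1 - alpha).
  { pose proof (sin2_cos2 theta) as E; unfold Rsqr in E; nra. }
  set (K := (beta ^ 2 - 4 * gamma * (1 - alpha)) / (1 - alpha)).
  assert (HK : 0 < K) by (unfold K; apply Rdiv_lt_0_compat; lra).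
  set (r := sqrt K / sin theta).
  assert (Hr : 0 < r) by (apply Rdiv_lt_0_compat; [apply sqrt_lt_R0 |]; lra).
  assert (Hrs : (1 - alpha) * (r * sin theta) ^ 2 = beta ^ 2 - 4 * gamma * (1 - alpha)).
  { replace (r * sin theta) with (sqrt K) by (unfold r; field; lra).
    simpl; rewrite Rmult_1_r, sqrt_sqrt by lra; unfold K; field; lra. }
  set (x0 := PI / (2 * INR n)).
  exists (fun k => - (beta / (2 * (1 - alpha))) + r * cos (x0 + INR k * theta)); split.
  - intros k; f_equal; f_equal.
    replace (x0 + INR (k + n) * theta) with (x0 + INR k * theta + 2 * INR m * PI).
    + apply cos_period.
    + unfold theta; rewrite plus_INR; field; lra.
  - intros k; split; [| split].
    + rewrite S_INR, Rmult_plus_distr_r, Rmult_1_l, <- Rplus_assoc.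
      apply poncelet_corr_cos; [lra | exact Hc | exact Hrs].
    + intros E; apply (cos_grid_neq n m k 1); [lia | lia |].
      rewrite Nat.add_1_r; fold theta x0; apply (Rmult_eq_reg_l r); lra.
    + intros E; apply (cos_grid_neq n m k 2); [lia | lia |].
      replace (k + 2)%nat with (S (S k)) by lia; fold theta x0; apply (Rmult_eq_reg_l r); lra.
Qed.

Theorem theorem2p7 (alpha beta gamma : R) (n : nat) (halpha : alpha <> 1) :
  poncelet_closed alpha beta gamma n <->
  ((exists m : nat, (0 < m)%nat /\ (2 * m < n)%nat /\
      alpha = (cos (PI * INR m / INR n)) ^ 2) /\
   beta ^ 2 - 4 * gamma * (1 - alpha) > 0).
Proof.
  rewrite poncelet_closed_iff_cyclic; split.
  - intros (Hn & B & HB).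
    exact (orbit_cos_condition _ _ _ _ _ halpha Hn (cyclic_polygon_orbit _ _ _ _ _ HB)).
  - intros H; destruct (cos_condition_orbit _ _ _ _ H) as (Hn & e & He).
    split; [exact Hn |]; eexists; exact (orbit_cyclic_polygon _ _ _ _ _ He).
Qed.
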